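(* Let $a_x,b_x$ be linearly independent linear forms. (A1) For a linear form $f$: $J[f,a_x,b_x]=0$ iff $f=g_0a_x+h_0b_x$ for some $g_0,h_0\in\mathbb C$. (B1) For a quadratic form $f$: $J[f,a_x,b_x]=0$ iff $f=g_0a_x^2+h_0a_xb_x+k_0b_x^2$ for some constants $g_0,h_0,k_0$. (B2) For a quadratic form $f$: $J^2[f,a_x^2,b_x^2]=0$ iff $f=g_xa_x+h_xb_x$ for some linear forms $g_x,h_x$. (C1) For a cubic form $f$: $J[f,a_x,b_x]=0$ iff $f=g_0a_x^3+h_0a_x^2b_x+k_0a_xb_x^2+i_0b_x^3$ for some constants $g_0,h_0,k_0,i_0$. (C2) For a cubic form $f$: $J^2[f,a_x^2,b_x^2]=0$ iff $f=g_xa_x^2+h_xa_xb_x+k_xb_x^2$ for some linear forms $g_x,h_x,k_x$. (C3) For a cubic form $f$: $J^3[f,a_x^3,b_x^3]=0$ iff $f=g_{xx}a_x+h_{xx}b_x$ for some quadratic forms $g_{xx},h_{xx}$.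
   Context: Forms are homogeneous polynomials with complex coefficients in $x=(x_1,x_2,x_3)$. For $a\in\mathbb C^3$, $a_x=a_1x_1+a_2x_2+a_3x_3$. For forms $f,g,h$ and $n\ge1$, the $n$-th transvectant is $J^n[f,g,h]=\big(\Omega^n(f(x)g(y)h(z))\big)|_{y=z=x}$, where $\Omega$ is the determinant of the operator matrix with rows $(\partial/\partial x_i)$, $(\partial/\partial y_i)$, $(\partial/\partial z_i)$. Equivalently, expand $\det(a,b,c)^n$ and replace each monomial $a^\alpha b^\beta c^\gamma$ by $\partial^\alpha f\,\partial^\beta g\,\partial^\gamma h$. Write $J=J^1$ (the Jacobian determinant). *)

From HB Require Import structures.
From mathcomp Require Import all_boot all_order all_algebra all_fingroup.
From mathcomp Require Import mpoly.
Set Implicit Arguments. Unset Strict Implicit. Unset Printing Implicit Defensive.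
Import Order.TTheory GRing.Theory Num.Theory.
Local Open Scope ring_scope.

(* Ternary forms over an algebraically closed numeric field C (e.g. the complex
   numbers): polynomials in {mpoly C[3]} in x = (x_0, x_1, x_2). *)

Section Transvectant.
Variable C : numClosedFieldType.

Definition linform (a : 'I_3 -> C) : {mpoly C[3]} := \sum_(i < 3) a i *: 'X_i.

Definition lin_indep (a b : 'I_3 -> C) : Prop :=
  forall s t : C, (forall i, s * a i + t * b i = 0) -> s = 0 /\ t = 0.

(* variables of the 9-variable ring: block k = 0,1,2 stands for x, y, z *)
Definition var9 (k i : 'I_3) : 'I_9 := inord (3 * k + i).

Definition emb (k : 'I_3) (p : {mpoly C[3]}) : {mpoly C[9]} :=
  p \mPo [tuple 'X_(var9 k i) | i < 3].

(* Omega = det of the operator matrix with rows d/dx_i, d/dy_i, d/dz_i *)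
Definition Omega (p : {mpoly C[9]}) : {mpoly C[9]} :=
  \sum_(s : 'S_3) (-1) ^+ s *:
     mderiv (var9 0 (s 0)) (mderiv (var9 1 (s 1)) (mderiv (var9 2 (s 2)) p)).

(* restriction y = z = x *)
Definition diag3 (q : {mpoly C[9]}) : {mpoly C[3]} :=
  q \mPo [tuple 'X_(inord (val j %% 3) : 'I_3) | j < 9].

Definition transv (n : nat) (f g h : {mpoly C[3]}) : {mpoly C[3]} :=
  diag3 (iter n Omega (emb 0 f * emb 1 g * emb 2 h)).

End Transvectant.

From HB Require Import structures.
From mathcomp Require Import all_boot all_order all_algebra all_fingroup.
From mathcomp Require Import mpoly zify ring.
Set Implicit Arguments. Unset Strict Implicit. Unset Printing Implicit Defensive.
Import Order.TTheory GRing.Theory Num.Theory.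
Local Open Scope ring_scope.

(* Write D f = det(grad f, a, b) (called Dab below).  The proof has three steps.
   1. Transvectants against powers of linear forms are powers of D: Omega maps
      f(x) a_y^(m+1) b_z^(p+1) to (m+1)(p+1) (D f)(x) a_y^m b_z^p, hence
      J^n[f, a_x^n, b_x^n] = (n!)^2 D^n f (transv_pow).
   2. D is a derivation killing a_x and b_x and lowering the degree, so D^(k+1)
      kills every sum  G_0 a_x^e + G_1 a_x^(e-1) b_x + ... + G_e b_x^e  whose
      coefficients G_j are forms of degree k (ab_span_kernel).
   3. Conversely, some coordinate x_i completes a_x, b_x to a system of linear
      coordinates; in the coordinates (x_i, a_x, b_x) the operator D is a nonzero
      multiple of the partial derivative in the first variable, so if
      D^(k+1) f = 0 then every monomial of f has degree <= k in x_i, and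
      regrouping the monomials puts f in the above shape (kernel_ab_span).
   The six items are the cases (k, e) = (0,1), (0,2), (1,1), (0,3), (1,2), (2,1)
   of this characterization, a form of degree 0 being a constant. *)

Section MPolyFacts.
Variables (R : comNzRingType) (n : nat).
Implicit Types (p q g : {mpoly R[n]}).

Lemma mpoly_ring_ind (P : {mpoly R[n]} -> Prop) :
  (forall c, P c%:MP) -> (forall i, P 'X_i) ->
  (forall p q, P p -> P q -> P (p + q)) ->
  (forall p q, P p -> P q -> P (p * q)) -> forall p, P p.
Proof.
move=> hC hX hD hM p; rewrite [p]mpolyE.
have P0 : P 0 by rewrite -mpolyC0.
have P1 : P 1 by rewrite -mpolyC1.
apply: (big_ind P) => // m _m; rewrite -mul_mpolyC; apply: (hM) => //.
rewrite mpolyXE_id; apply: (big_ind P) => // i _i.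
elim: (m i) => [|k ih]; first by rewrite expr0.
by rewrite exprS; apply: (hM).
Qed.

Lemma comp_mpolyA k l p (lq : n.-tuple {mpoly R[k]}) (lr : k.-tuple {mpoly R[l]}) :
  (p \mPo lq) \mPo lr = p \mPo [tuple tnth lq i \mPo lr | i < n].
Proof.
elim/mpoly_ring_ind: p => [c|i|p q hp hq|p q hp hq].
- by rewrite !comp_mpolyC.
- by rewrite !comp_mpolyXU -!tnth_nth tnth_map tnth_ord_tuple.
- by rewrite !raddfD /= hp hq.
- by rewrite !rmorphM /= hp hq.
Qed.

Lemma mderivXU (j v : 'I_n) : mderiv j ('X_v : {mpoly R[n]}) = ((v == j)%:R)%:MP.
Proof.
rewrite mderivX mnm1E; case: eqP => [->|_]; last by rewrite scale0r mpolyC0.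
have -> : (U_(j) - U_(j) = 0)%MM by apply/mnmP => l; rewrite mnmBE subnn mnm0E.
by rewrite mpolyX0 scale1r mpolyC1.
Qed.

Lemma mderiv_dhomogS (j : 'I_n) d p : p \is d.+1.-homog -> mderiv j p \is d.-homog.
Proof.
move=> hp; apply/dhomogP => m; rewrite mcoeff_msupp mcoeff_deriv => hm.
have : p@_(m + U_(j)) != 0 by apply: contraNneq hm => ->; rewrite mul0rn.
rewrite -mcoeff_msupp => /(dhomog_mf hp) h.
have : (mdeg m + 1 = d.+1)%N by rewrite -(mdeg1 j) -mdegD; exact: h.
by rewrite addn1; case.
Qed.

Lemma mderiv_dhomog0 (j : 'I_n) p : p \is 0.-homog -> mderiv j p = 0.
Proof.
move=> hp; apply/mpolyP => m; rewrite mcoeff_deriv mcoeff0.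
rewrite (dhomog_nemf_coeff hp) ?mul0rn //; apply/eqP => h.
have : (mdeg m + 1 = 0)%N by rewrite -(mdeg1 j) -mdegD; exact: h.
by rewrite addn1.
Qed.

Lemma dhomog0_const p : p \is 0.-homog -> p = (p@_0)%:MP.
Proof.
move=> hp; apply/mpolyP => m; rewrite mcoeffC.
have [->|m0] := eqVneq m 0%MM; first by rewrite mulr1.
by rewrite (dhomog_nemf_coeff hp) ?mulr0 // mdeg_eq0.
Qed.

End MPolyFacts.

Section MPolyCharZero.
Variables (R : numDomainType) (n : nat).

Lemma iter_mderiv_supp (j : 'I_n) k (g : {mpoly R[n]}) m :
  iter k (mderiv j) g = 0 -> m \in msupp g -> (m j < k)%N.
Proof.
elim: k g m => [|k ih] g m h hm.
  by move: hm; rewrite /= in h; rewrite h mcoeff_msupp mcoeff0 eqxx.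
rewrite iterSr in h; rewrite ltnNge; apply/negP => hk.
have mj : (0 < m j)%N by apply: leq_ltn_trans hk.
have hm' : (m - U_(j) + U_(j) = m)%MM by rewrite submK // lep1mP -lt0n.
have : (m - U_(j))%MM \in msupp (mderiv j g).
  by rewrite mcoeff_msupp mcoeff_deriv hm' mulrn_eq0 negb_or -mcoeff_msupp hm.
move/(ih _ _ h); rewrite mnmBE mnm1E eqxx subn1 ltnNge.
by rewrite -ltnS prednK // hk.
Qed.

End MPolyCharZero.

Lemma big_ord3 (T : Type) (idx : T) (op : Monoid.law idx) (F : 'I_3 -> T) :
  \big[op/idx]_(i < 3) F i = op (op (F 0) (F 1)) (F 2).
Proof.
rewrite !big_ord_recl big_ord0 Monoid.mulm1 Monoid.mulmA.
have -> : lift ord0 ord0 = 1 :> 'I_3 by apply: val_inj.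
by have -> : lift ord0 (lift ord0 ord0) = 2 :> 'I_3 by apply: val_inj.
Qed.

Lemma ord3_cases (P : 'I_3 -> Prop) : P 0 -> P 1 -> P 2 -> forall i, P i.
Proof.
move=> h0 h1 h2 [[|[|[|//]]] hi].
- by have -> : Ordinal hi = 0 by apply: val_inj.
- by have -> : Ordinal hi = 1 by apply: val_inj.
- by have -> : Ordinal hi = 2 by apply: val_inj.
Qed.

Section Rows3.
Variable R : comNzRingType.
Implicit Types u v w : 'I_3 -> R.

Definition mx_rows3 u v w : 'M[R]_3 :=
  \matrix_(r, k) (if r == 0 then u k else if r == 1 then v k else w k).

Lemma det_rows3_leibniz u v w :
  \det (mx_rows3 u v w) = \sum_(s : 'S_3) (-1) ^+ s * u (s 0) * v (s 1) * w (s 2).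
Proof. by apply: eq_bigr => s _; rewrite big_ord3 !mxE /= !mulrA. Qed.

Lemma det_rows3 u v w : \det (mx_rows3 u v w) =
  u 0 * (v 1 * w 2 - v 2 * w 1) + u 1 * (v 2 * w 0 - v 0 * w 2)
  + u 2 * (v 0 * w 1 - v 1 * w 0).
Proof.
rewrite (expand_det_row _ 0) !big_ord_recl big_ord0 /cofactor.
rewrite !(expand_det_row _ 0) !big_ord_recl !big_ord0 /cofactor !det_mx11 !mxE /=.
(* Index the entries by natural numbers so that ring sees equal atoms. *)
pose u' k := u (inord k); pose v' k := v (inord k); pose w' k := w (inord k).
have Eu i : u i = u' (val i) by rewrite /u' inord_val.
have Ev i : v i = v' (val i) by rewrite /v' inord_val.
have Ew i : w i = w' (val i) by rewrite /w' inord_val.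
rewrite !Eu !Ev !Ew /= /bump /=.
have -> : (1 %% 3 = 1)%N by [].
have -> : ((1 %% 3 + 1 %% 3) %% 3 = 2)%N by [].
ring.
Qed.

Lemma det_rows3_eq01 v w : \det (mx_rows3 v v w) = 0.
Proof. by apply: (@determinant_alternate _ _ _ 0 1) => // k; rewrite !mxE. Qed.

Lemma det_rows3_eq02 v w : \det (mx_rows3 w v w) = 0.
Proof. by apply: (@determinant_alternate _ _ _ 0 2) => // k; rewrite !mxE. Qed.

End Rows3.

(* An independent pair (a, b) has a nonzero minor: det(e_i, a, b) != 0 for
   some basis vector e_i; otherwise a_k b - b_k a = 0 for all k would force
   a = 0. *)
Lemma exists_coord (C : numClosedFieldType) (a b : 'I_3 -> C) : lin_indep a b ->
  exists i : 'I_3, \det (mx_rows3 (fun j => (j == i)%:R) a b) != 0.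
Proof.
move=> hab; have [i hi|all0] := pickP (fun i : 'I_3 =>
  \det (mx_rows3 (fun j => (j == i)%:R) a b) != 0); first by exists i.
have minor i : \det (mx_rows3 (fun j => (j == i)%:R) a b) = 0.
  by apply/eqP; rewrite -[_ == 0]negbK all0.
have := minor 0; have := minor 1; have := minor 2; rewrite !det_rows3 /=.
rewrite !mul1r !mul0r ?add0r ?addr0 => /eqP + /eqP + /eqP.
rewrite !subr_eq0 => /eqP h01 /eqP h20 /eqP h12.
have cross k l : a k * b l = a l * b k.
  by elim/ord3_cases: k; elim/ord3_cases: l; rewrite ?h12 ?h20 ?h01.
have a0 k : a k = 0.
  suff hz l : b k * a l + - a k * b l = 0.
    by have [_ /eqP] := hab _ _ hz; rewrite oppr_eq0 => /eqP.
  by rewrite mulNr mulrC cross subrr.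
suff hz l : 1 * a l + 0 * b l = 0 by have [/eqP] := hab _ _ hz; rewrite oner_eq0.
by rewrite a0 mulr0 mul0r addr0.
Qed.

Section Derivation.
Variables (C : numClosedFieldType) (a b : 'I_3 -> C).
Implicit Types (p q f g : {mpoly C[3]}) (v : 'I_3 -> C).

(* D f = det(grad f, a, b) = sum over s in S_3 of sign(s) a_(s 1) b_(s 2) d_(s 0) f;
   this is the Jacobian J[f, a_x, b_x]. *)
Definition Dab f : {mpoly C[3]} :=
  \sum_(s : 'S_3) ((-1) ^+ s * a (s 1) * b (s 2)) *: mderiv (s 0) f.

Lemma DabD p q : Dab (p + q) = Dab p + Dab q.
Proof. by rewrite /Dab -big_split; apply: eq_bigr => s _; rewrite mderivD scalerDr. Qed.

Lemma DabZ c p : Dab (c *: p) = c *: Dab p.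
Proof.
by rewrite /Dab scaler_sumr; apply: eq_bigr => s _; rewrite mderivZ !scalerA mulrC.
Qed.

Lemma DabC c : Dab c%:MP = 0.
Proof. by rewrite /Dab big1 // => s _; rewrite mderivC scaler0. Qed.

Lemma DabM p q : Dab (p * q) = Dab p * q + p * Dab q.
Proof.
rewrite /Dab mulr_suml mulr_sumr -big_split; apply: eq_bigr => s _.
by rewrite mderivM scalerDr scalerAl scalerAr.
Qed.

Lemma iter_DabD n p q : iter n Dab (p + q) = iter n Dab p + iter n Dab q.
Proof. by elim: n => //= n ->; rewrite DabD. Qed.

Lemma iter_Dab0 n : iter n Dab 0 = 0.
Proof. by elim: n => //= n ->; rewrite -mpolyC0 DabC. Qed.

Lemma iter_Dab_sum n (I : Type) (r : seq I) (F : I -> {mpoly C[3]}) :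
  iter n Dab (\sum_(i <- r) F i) = \sum_(i <- r) iter n Dab (F i).
Proof.
elim: r => [|x r ih]; last by rewrite !big_cons iter_DabD ih.
by rewrite !big_nil iter_Dab0.
Qed.

Lemma deriv_linform v j : mderiv j (linform v) = (v j)%:MP.
Proof.
rewrite /linform raddf_sum (bigD1 j) //= big1 => [|i /negPf ij].
  by rewrite addr0 mderivZ mderivXU eqxx mpolyC1 -mul_mpolyC mulr1.
by rewrite mderivZ mderivXU ij mpolyC0 scaler0.
Qed.

Lemma Dab_linform v : Dab (linform v) = (\det (mx_rows3 v a b))%:MP.
Proof.
rewrite det_rows3_leibniz rmorph_sum; apply: eq_bigr => s _.
by rewrite deriv_linform -mul_mpolyC -rmorphM mulrAC [_ * v _]mulrAC.
Qed.

Lemma Dab_a : Dab (linform a) = 0.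
Proof. by rewrite Dab_linform det_rows3_eq01 mpolyC0. Qed.

Lemma Dab_b : Dab (linform b) = 0.
Proof. by rewrite Dab_linform det_rows3_eq02 mpolyC0. Qed.

Lemma Dab_ab_pow y z : Dab (linform a ^+ y * linform b ^+ z) = 0.
Proof.
have Dpow v k : Dab (linform v) = 0 -> Dab (linform v ^+ k) = 0.
  move=> hv; elim: k => [|k ih]; first by rewrite expr0 -mpolyC1 DabC.
  by rewrite exprS DabM hv ih mul0r mulr0 addr0.
by rewrite DabM (Dpow _ _ Dab_a) (Dpow _ _ Dab_b) mul0r mulr0 addr0.
Qed.

Lemma iter_Dab_mulr n p q : Dab q = 0 -> iter n Dab (p * q) = iter n Dab p * q.
Proof. by move=> hq; elim: n => //= n ->; rewrite DabM hq mulr0 addr0. Qed.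

Lemma Dab_dhomogS d p : p \is d.+1.-homog -> Dab p \is d.-homog.
Proof.
by move=> hp; apply: rpred_sum => s _; apply: rpredZ; apply: mderiv_dhomogS.
Qed.

(* Since D lowers degrees, D^n kills forms of degree < n. *)
Lemma iter_Dab_dhomog n d p : (d < n)%N -> p \is d.-homog -> iter n Dab p = 0.
Proof.
elim: n d p => [//|n ih] [|d] p hdn hp; rewrite iterSr.
  suff -> : Dab p = 0 by rewrite iter_Dab0.
  by rewrite /Dab big1 // => s _; rewrite mderiv_dhomog0 // scaler0.
by rewrite (ih d) // Dab_dhomogS.
Qed.

Lemma Dab_comp (lq : 3.-tuple {mpoly C[3]}) g :
  Dab (g \mPo lq) = \sum_r Dab (tnth lq r) * (mderiv r g \mPo lq).
Proof.
elim/mpoly_ring_ind: g => [c|j|p q hp hq|p q hp hq].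
- rewrite comp_mpolyC DabC big1 // => r _.
  by rewrite mderivC comp_mpoly0 mulr0.
- rewrite comp_mpolyXU -tnth_nth (bigD1 j) //= big1 ?addr0 => [|r /negPf rj].
    by rewrite mderivXU eqxx comp_mpolyC mpolyC1 mulr1.
  by rewrite mderivXU eq_sym rj comp_mpolyC mpolyC0 mulr0.
- rewrite raddfD /= DabD hp hq -big_split /=.
  by apply: eq_bigr => r _; rewrite mderivD raddfD mulrDr.
- rewrite rmorphM /= DabM hp hq mulr_suml mulr_sumr -big_split /=.
  apply: eq_bigr => r _; rewrite mderivM raddfD /= !rmorphM /= mulrDr.
  by move: (Dab _) (p \mPo _) (q \mPo _) (_ \mPo lq) (_ \mPo lq) => *; ring.
Qed.

End Derivation.

Lemma var9_val (k i : 'I_3) : val (var9 k i) = (3 * k + i)%N.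
Proof. by rewrite /var9; apply: inordK; have := ltn_ord k; have := ltn_ord i; lia. Qed.

Lemma var9_eq (k i k' i' : 'I_3) : (var9 k i == var9 k' i') = (k == k') && (i == i').
Proof.
apply/idP/andP => [/eqP/(congr1 val)|[/eqP -> /eqP ->] //]; rewrite !var9_val => h.
have := ltn_ord i; have := ltn_ord i' => *.
by split; apply/eqP/val_inj => /=; lia.
Qed.

Section Transvectant.
Variable C : numClosedFieldType.
Implicit Types (f g h p : {mpoly C[3]}) (a b : 'I_3 -> C).

Lemma embX (k i : 'I_3) : emb k ('X_i : {mpoly C[3]}) = 'X_(var9 k i).
Proof. by rewrite /emb comp_mpolyXU -tnth_nth tnth_map tnth_ord_tuple. Qed.

Lemma embD (k : 'I_3) p q : emb k (p + q) = emb k p + emb k q.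
Proof. exact: raddfD. Qed.

Lemma embM (k : 'I_3) p q : emb k (p * q) = emb k p * emb k q.
Proof. exact: rmorphM. Qed.

Lemma emb1 (k : 'I_3) : emb k (1 : {mpoly C[3]}) = 1.
Proof. exact: rmorph1. Qed.

Lemma embZ (k : 'I_3) c p : emb k (c *: p) = c *: emb k p.
Proof. exact: linearZ. Qed.

Lemma emb_sum (k : 'I_3) (I : finType) (F : I -> {mpoly C[3]}) :
  emb k (\sum_i F i) = \sum_i emb k (F i).
Proof. exact: raddf_sum. Qed.

Lemma mderiv_emb (k k' j : 'I_3) p :
  mderiv (var9 k j) (emb k' p) = (k == k')%:R *: emb k' (mderiv j p).
Proof.
elim/mpoly_ring_ind: p => [c|i|p q hp hq|p q hp hq].
- by rewrite /emb comp_mpolyC !mderivC raddf0 scaler0.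
- rewrite embX !mderivXU /emb comp_mpolyC var9_eq [k' == k]eq_sym.
  by case: (k == k'); case: (i == j); rewrite ?scale1r ?scale0r ?mpolyC0.
- by rewrite !(embD, mderivD) hp hq scalerDr.
- by rewrite !(embM, mderivM, embD) hp hq scalerDr -scalerAl -scalerAr.
Qed.

Lemma Omega_prod f g h :
  Omega (emb 0 f * emb 1 g * emb 2 h) =
  \sum_(s : 'S_3) (-1) ^+ s *:
     (emb 0 (mderiv (s 0) f) * emb 1 (mderiv (s 1) g) * emb 2 (mderiv (s 2) h)).
Proof.
apply: eq_bigr => s _; congr (_ *: _).
by do 3 rewrite !mderivM !mderiv_emb /= !(scale0r, scale1r, mulr0, mul0r, add0r, addr0).
Qed.

Lemma deriv_pow_linform (a : 'I_3 -> C) j m :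
  mderiv j (linform a ^+ m.+1) = (m.+1%:R * a j) *: linform a ^+ m.
Proof.
elim: m => [|m ih]; first by rewrite expr1 expr0 deriv_linform mul1r -mul_mpolyC mulr1.
rewrite exprS mderivM ih deriv_linform -scalerAr -exprS mul_mpolyC -scalerDl.
by congr (_ *: _); rewrite -addn1 natrD; ring.
Qed.

Definition tprod a b f y z : {mpoly C[9]} :=
  emb 0 f * emb 1 (linform a ^+ y) * emb 2 (linform b ^+ z).

Lemma Omega_step a b f y z :
  Omega (tprod a b f y.+1 z.+1) = (y.+1 * z.+1)%:R *: tprod a b (Dab a b f) y z.
Proof.
rewrite /tprod Omega_prod /Dab emb_sum !mulr_suml scaler_sumr.
apply: eq_bigr => s _; rewrite !deriv_pow_linform !embZ natrM.
rewrite -!mul_mpolyC !mpolyCM.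
move: (emb 0 _) (emb 1 _) (emb 2 _) ((-1) ^+ s)%:MP (y.+1%:R)%:MP (z.+1%:R)%:MP
  (a (s 1))%:MP (b (s 2))%:MP => *.
ring.
Qed.

Lemma Omega_iter a b f k y z :
  iter k (@Omega C) (tprod a b f (y + k) (z + k)) =
  ((y + k) ^_ k * (z + k) ^_ k)%:R *: tprod a b (iter k (Dab a b) f) y z.
Proof.
elim: k y z => [|k ih] y z; first by rewrite !addn0 scale1r.
have OmegaZ c q : Omega (c *: q) = c *: Omega q.
  by rewrite scaler_sumr; apply: eq_bigr => s _; rewrite !mderivZ !scalerA mulrC.
rewrite iterS -!addSnnS ih OmegaZ Omega_step scalerA -natrM -iterS.
by rewrite !ffactnSr !addnK mulnACA.
Qed.

Lemma diag_emb0 p : diag3 (emb 0 p) = p.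
Proof.
rewrite /diag3 /emb comp_mpolyA -[RHS]comp_mpoly_id; congr comp_mpoly.
apply: eq_from_tnth => i; rewrite !tnth_map !tnth_ord_tuple.
rewrite comp_mpolyXU -tnth_nth tnth_map tnth_ord_tuple var9_val.
by congr 'X_(_); apply: val_inj; rewrite /= add0n modn_small // inord_val.
Qed.

Lemma transv_pow a b n f :
  transv n f (linform a ^+ n) (linform b ^+ n) = (n`! ^ 2)%:R *: iter n (Dab a b) f.
Proof.
have := Omega_iter a b f n 0 0; rewrite /transv !add0n /tprod => ->.
have diag3Z c q : diag3 (c *: q) = c *: diag3 q by exact: linearZ.
by rewrite !expr0 !emb1 !mulr1 diag3Z diag_emb0 ffactnn.
Qed.



(* Hence, in characteristic 0, the transvectant vanishes iff D^n f does. *)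
Lemma transv_pow_eq0 a b n f :
  transv n f (linform a ^+ n) (linform b ^+ n) = 0 <-> iter n (Dab a b) f = 0.
Proof.
rewrite transv_pow; split => [/eqP|->]; last by rewrite scaler0.
by rewrite scaler_eq0 pnatr_eq0 expn_eq0 (negPf (lt0n_neq0 (fact_gt0 n))) => /eqP.
Qed.

Lemma transv1_eq0 a b f : transv 1 f (linform a) (linform b) = 0 <-> Dab a b f = 0.
Proof. by have := transv_pow_eq0 a b 1 f; rewrite !expr1. Qed.
End Transvectant.

Section LinearSubstitution.
Variable C : numClosedFieldType.
Implicit Types (p : {mpoly C[3]}) (v w : 'I_3 -> C) (M N : 'M[C]_3).

Lemma linform_ext v w : v =1 w -> linform v = linform w.
Proof. by move=> h; apply: eq_bigr => k _; rewrite h. Qed.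

Lemma linform_delta k : linform (fun j => (j == k)%:R) = ('X_k : {mpoly C[3]}).
Proof.
rewrite /linform (bigD1 k) //= eqxx scale1r big1 ?addr0 // => j /negPf ->.
by rewrite scale0r.
Qed.

Lemma linform_dhomog v : linform v \is 1.-homog.
Proof. by apply: rpred_sum => k _; apply: rpredZ; rewrite dhomogX; apply/eqP; exact: mdeg1. Qed.

Definition lin_subst M : 3.-tuple {mpoly C[3]} :=
  [tuple linform (fun k => M r k) | r < 3].

Lemma tnth_lin_subst M r : tnth (lin_subst M) r = linform (fun k => M r k).
Proof. by rewrite tnth_map tnth_ord_tuple. Qed.

Lemma comp_linform_subst v M :
  linform v \mPo lin_subst M = linform (fun k => \sum_r v r * M r k).
Proof.
rewrite /linform raddf_sum /=; under eq_bigr do rewrite comp_mpolyZ comp_mpolyXU -tnth_nth.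
under eq_bigr do rewrite tnth_lin_subst /linform scaler_sumr.
rewrite exchange_big; apply: eq_bigr => k _ /=; rewrite scaler_suml.
by apply: eq_bigr => r _; rewrite scalerA.
Qed.

Lemma lin_subst_mul p N M :
  (p \mPo lin_subst N) \mPo lin_subst M = p \mPo lin_subst (N *m M).
Proof.
rewrite comp_mpolyA; congr comp_mpoly; apply: eq_from_tnth => j.
rewrite tnth_map !tnth_lin_subst tnth_ord_tuple comp_linform_subst.
by apply: linform_ext => k; rewrite mxE.
Qed.

Lemma lin_subst1 p : p \mPo lin_subst 1%:M = p.
Proof.
rewrite -[RHS]comp_mpoly_id; congr comp_mpoly; apply: eq_from_tnth => j.
rewrite tnth_lin_subst tnth_map tnth_ord_tuple -linform_delta.
by apply: linform_ext => k; rewrite mxE eq_sym.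
Qed.

Lemma lin_subst_dhomog p d M : p \is d.-homog -> p \mPo lin_subst M \is d.-homog.
Proof.
move=> hp; rewrite comp_mpolyEX big_seq; apply: rpred_sum => m hm; apply: rpredZ.
have hdeg : mdeg m = d := dhomog_mf hp hm.
rewrite comp_mpolyX -hdeg mdegE.
elim/big_rec2: _ => [|r d' q _ hq]; first exact: dhomog1.
by have := dhomogM (dhomogMn (m r) (linform_dhomog (fun k => M r k))) hq; rewrite mul1n tnth_lin_subst.
Qed.

End LinearSubstitution.

(* When det(e_i, a, b) != 0, (x_i, a_x, b_x) is a system of linear coordinates. *)
Section Coordinates.
Variables (C : numClosedFieldType) (a b : 'I_3 -> C) (i : 'I_3).
Let e_i : 'I_3 -> C := fun j => (j == i)%:R.
Let M : 'M[C]_3 := mx_rows3 e_i a b.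
Hypothesis detM_neq0 : \det M != 0.

Definition coords : 3.-tuple {mpoly C[3]} := lin_subst M.

Lemma coords_0 : tnth coords 0 = linform e_i.
Proof. by rewrite tnth_lin_subst; apply: linform_ext => k; rewrite mxE. Qed.

Lemma coords_1 : tnth coords 1 = linform a.
Proof. by rewrite tnth_lin_subst; apply: linform_ext => k; rewrite mxE. Qed.

Lemma coords_2 : tnth coords 2 = linform b.
Proof. by rewrite tnth_lin_subst; apply: linform_ext => k; rewrite mxE. Qed.

Lemma comp_coords_monomial (m : 'X_{1..3}) :
  'X_[m] \mPo coords = 'X_i ^+ m 0 * linform a ^+ m 1 * linform b ^+ m 2.
Proof. by rewrite comp_mpolyX big_ord3 /= coords_0 coords_1 coords_2 linform_delta. Qed.

Lemma Dab_coords h : Dab a b (h \mPo coords) = \det M *: (mderiv 0 h \mPo coords).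
Proof.
rewrite Dab_comp big_ord3 /= coords_0 coords_1 coords_2 Dab_a Dab_b Dab_linform.
by rewrite !mul0r !addr0 mul_mpolyC.
Qed.

Lemma iter_Dab_coords n h :
  iter n (Dab a b) (h \mPo coords) = \det M ^+ n *: (iter n (mderiv 0) h \mPo coords).
Proof.
elim: n => [|n ih]; first by rewrite expr0 scale1r.
by rewrite !iterS ih DabZ Dab_coords scalerA exprSr.
Qed.

Lemma kernel_coords n d f : f \is d.-homog -> iter n (Dab a b) f = 0 ->
  exists g, [/\ f = g \mPo coords, g \is d.-homog & iter n (mderiv 0) g = 0].
Proof.
move=> hf hD; have M_unit : M \in unitmx by rewrite unitmxE unitfE.
have forth p : (p \mPo lin_subst (invmx M)) \mPo coords = p.
  by rewrite lin_subst_mul mulVmx // lin_subst1.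
have back p : (p \mPo coords) \mPo lin_subst (invmx M) = p.
  by rewrite lin_subst_mul mulmxV // lin_subst1.
exists (f \mPo lin_subst (invmx M)); split; [by rewrite forth | exact: lin_subst_dhomog |].
move: hD; rewrite -{1}[f]forth iter_Dab_coords => /eqP.
rewrite scaler_eq0 expf_eq0 (negPf detM_neq0) andbF /= => /eqP h0.
by rewrite -[LHS]back h0 comp_mpoly0.
Qed.

End Coordinates.

Section KernelForms.
Variables (C : numClosedFieldType) (a b : 'I_3 -> C).
Local Notation ax := (linform a).
Local Notation bx := (linform b).
Implicit Types (f g : {mpoly C[3]}) (k e : nat).

Definition ab_span k e f := exists G : nat -> {mpoly C[3]},
  (forall j, (j <= e)%N -> G j \is k.-homog) /\
  f = \sum_(0 <= j < e.+1) G j * (ax ^+ (e - j) * bx ^+ j).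

Lemma ab_span0 k e : ab_span k e 0.
Proof.
exists (fun _ => 0); split => [j _|]; first exact: rpred0.
by rewrite big1 // => j _; rewrite mul0r.
Qed.

Lemma ab_spanD k e f g : ab_span k e f -> ab_span k e g -> ab_span k e (f + g).
Proof.
move=> [G [hG ->]] [H [hH ->]]; exists (fun j => G j + H j); split.
  by move=> j hj; apply: rpredD; [exact: hG | exact: hH].
by rewrite -big_split; apply: eq_bigr => j _; rewrite mulrDl.
Qed.

Lemma ab_spanZ k e c f : ab_span k e f -> ab_span k e (c *: f).
Proof.
move=> [G [hG ->]]; exists (fun j => c *: G j); split.
  by move=> j hj; apply: rpredZ; exact: hG.
by rewrite scaler_sumr; apply: eq_bigr => j _; rewrite scalerAl.
Qed.

Lemma monomial_dhomog (i : 'I_3) x y z :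
  'X_i ^+ x * ax ^+ y * bx ^+ z \is (x + y + z).-homog.
Proof.
have hX : ('X_i : {mpoly C[3]}) \is 1.-homog by rewrite -linform_delta linform_dhomog.
have := dhomogM (dhomogM (dhomogMn x hX) (dhomogMn y (linform_dhomog a)))
                (dhomogMn z (linform_dhomog b)).
by rewrite !mul1n.
Qed.

(* A monomial x_i^x a_x^y b_x^z of degree k + e with x <= k lies in ab_span k e:
   split off a_x^(e-j) b_x^j with j = min(z, e). *)
Lemma ab_span_monomial k e (i : 'I_3) x y z : (x <= k)%N -> (x + y + z = k + e)%N ->
  ab_span k e ('X_i ^+ x * ax ^+ y * bx ^+ z).
Proof.
move=> hx hdeg; pose j := minn z e.
have hje : (j <= e)%N by rewrite geq_minr.
have hjz : (j <= z)%N by rewrite geq_minl.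
have hy : (e - j <= y)%N by rewrite /j; lia.
pose P := 'X_i ^+ x * ax ^+ (y - (e - j)) * bx ^+ (z - j).
exists (fun l => if l == j then P else 0); split.
  move=> l _; case: eqP => _; last exact: rpred0.
  by have := monomial_dhomog i x (y - (e - j)) (z - j); rewrite (_ : (x + _ + _ = k)%N) //; lia.
rewrite /index_iota subn0 (bigD1_seq j) ?iota_uniq ?mem_iota //= eqxx big1_seq ?addr0.
  rewrite /P -[in LHS](subnK hy) -[in LHS](subnK hjz) !exprD.
  by move: ('X_i ^+ x) (ax ^+ _) (ax ^+ _) (bx ^+ _) (bx ^+ _) => *; ring.
by move=> l /andP[/negPf -> _]; rewrite mul0r.
Qed.

Lemma ab_span_kernel k e f : ab_span k e f -> iter k.+1 (Dab a b) f = 0.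
Proof.
move=> [G [hG ->]]; rewrite iter_Dab_sum big_seq big1 // => j.
rewrite mem_index_iota => /andP[_ hj].
by rewrite iter_Dab_mulr ?Dab_ab_pow // (iter_Dab_dhomog _ _ (ltnSn k) (hG j hj)) mul0r.
Qed.

Lemma kernel_ab_span k e f : lin_indep a b -> f \is (k + e).-homog ->
  iter k.+1 (Dab a b) f = 0 -> ab_span k e f.
Proof.
move=> hab hf hD; have [i hi] := exists_coord hab.
have [g [-> hg hz]] := kernel_coords hi hf hD.
rewrite comp_mpolyEX big_seq; apply: (big_ind (ab_span k e)) => [|p q|m hm].
- exact: ab_span0.
- exact: ab_spanD.
rewrite comp_coords_monomial; apply: ab_spanZ; apply: ab_span_monomial.
  by rewrite -ltnS; exact: iter_mderiv_supp hz hm.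
have hdeg : mdeg m = (k + e)%N := dhomog_mf hg hm.
by rewrite -hdeg mdegE big_ord3.
Qed.

Lemma iter_Dab_eq0 k e f : lin_indep a b -> f \is (k + e).-homog ->
  iter k.+1 (Dab a b) f = 0 <-> ab_span k e f.
Proof. by move=> hab hf; split; [exact: kernel_ab_span | exact: ab_span_kernel]. Qed.

Lemma Dab_eq0 e f : lin_indep a b -> f \is e.-homog ->
  Dab a b f = 0 <->
  exists c : nat -> C, f = \sum_(0 <= j < e.+1) c j *: (ax ^+ (e - j) * bx ^+ j).
Proof.
move=> hab hf; split => [/(kernel_ab_span (k := 0) hab hf) [G [hG ->]]|[c ->]].
  exists (fun j => (G j)@_0); rewrite big_seq [RHS]big_seq; apply: eq_bigr => j.
  rewrite mem_index_iota => /andP[_ hj].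
  by rewrite {1}(dhomog0_const (hG j hj)) mul_mpolyC.
apply: (ab_span_kernel (k := 0)); exists (fun j => (c j)%:MP); split.
  by move=> j _; rewrite -[_%:MP]mulr1 mul_mpolyC; apply: rpredZ; exact: dhomog1.
by apply: eq_bigr => j _; rewrite mul_mpolyC.
Qed.

End KernelForms.

Ltac expand_ab_sum :=
  rewrite /index_iota /= !big_cons big_nil !(subSS, subn0) /=
          !(expr0, expr1, mulr1, mul1r, addr0, addrA).

Section Lemma51.
Variables (C : numClosedFieldType) (a b : 'I_3 -> C).
Hypothesis hab : lin_indep a b.
Local Notation ax := (linform a).
Local Notation bx := (linform b).
Implicit Type f : {mpoly C[3]}.

Lemma transv_A1 f : f \is 1.-homog ->
  transv 1 f ax bx = 0 <-> exists g0 h0 : C, f = g0 *: ax + h0 *: bx.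
Proof.
move=> hf; apply: (iff_trans (transv1_eq0 a b f)); apply: (iff_trans (Dab_eq0 hab hf)).
split=> [[c ->]|[g0 [h0 ->]]]; [exists (c 0), (c 1) | exists (nth 0 [:: g0; h0])];
  by expand_ab_sum.
Qed.

Lemma transv_B1 f : f \is 2.-homog ->
  transv 1 f ax bx = 0 <->
  exists g0 h0 k0 : C, f = g0 *: ax ^+ 2 + h0 *: (ax * bx) + k0 *: bx ^+ 2.
Proof.
move=> hf; apply: (iff_trans (transv1_eq0 a b f)); apply: (iff_trans (Dab_eq0 hab hf)).
split=> [[c ->]|[g0 [h0 [k0 ->]]]];
  [exists (c 0), (c 1), (c 2) | exists (nth 0 [:: g0; h0; k0])];
  by expand_ab_sum.
Qed.

Lemma transv_C1 f : f \is 3.-homog ->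
  transv 1 f ax bx = 0 <->
  exists g0 h0 k0 i0 : C, f = g0 *: ax ^+ 3 + h0 *: (ax ^+ 2 * bx)
                           + k0 *: (ax * bx ^+ 2) + i0 *: bx ^+ 3.
Proof.
move=> hf; apply: (iff_trans (transv1_eq0 a b f)); apply: (iff_trans (Dab_eq0 hab hf)).
split=> [[c ->]|[g0 [h0 [k0 [i0 ->]]]]];
  [exists (c 0), (c 1), (c 2), (c 3) | exists (nth 0 [:: g0; h0; k0; i0])];
  by expand_ab_sum.
Qed.

Lemma transv_B2 f : f \is 2.-homog ->
  transv 2 f (ax ^+ 2) (bx ^+ 2) = 0 <->
  exists gx hx : {mpoly C[3]}, gx \is 1.-homog /\ hx \is 1.-homog /\
    f = gx * ax + hx * bx.
Proof.
move=> hf; apply: (iff_trans (transv_pow_eq0 a b 2 f)).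
apply: (iff_trans (iter_Dab_eq0 (k := 1) (e := 1) hab hf)).
split=> [[G [hG ->]]|[gx [hx [hg [hh ->]]]]].
  by exists (G 0), (G 1); do !split; [exact: hG | exact: hG | expand_ab_sum].
exists (nth 0 [:: gx; hx]); split; first by case=> [|[|j]].
by expand_ab_sum.
Qed.

Lemma transv_C2 f : f \is 3.-homog ->
  transv 2 f (ax ^+ 2) (bx ^+ 2) = 0 <->
  exists gx hx kx : {mpoly C[3]},
    [/\ gx \is 1.-homog, hx \is 1.-homog & kx \is 1.-homog] /\
    f = gx * ax ^+ 2 + hx * (ax * bx) + kx * bx ^+ 2.
Proof.
move=> hf; apply: (iff_trans (transv_pow_eq0 a b 2 f)).
apply: (iff_trans (iter_Dab_eq0 (k := 1) (e := 2) hab hf)).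
split=> [[G [hG ->]]|[gx [hx [kx [[hg hh hk] ->]]]]].
  by exists (G 0), (G 1), (G 2); split; [split; exact: hG | expand_ab_sum].
exists (nth 0 [:: gx; hx; kx]); split; first by case=> [|[|[|j]]].
by expand_ab_sum.
Qed.

Lemma transv_C3 f : f \is 3.-homog ->
  transv 3 f (ax ^+ 3) (bx ^+ 3) = 0 <->
  exists gxx hxx : {mpoly C[3]}, gxx \is 2.-homog /\ hxx \is 2.-homog /\
    f = gxx * ax + hxx * bx.
Proof.
move=> hf; apply: (iff_trans (transv_pow_eq0 a b 3 f)).
apply: (iff_trans (iter_Dab_eq0 (k := 2) (e := 1) hab hf)).
split=> [[G [hG ->]]|[gx [hx [hg [hh ->]]]]].
  by exists (G 0), (G 1); do !split; [exact: hG | exact: hG | expand_ab_sum].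
exists (nth 0 [:: gx; hx]); split; first by case=> [|[|j]].
by expand_ab_sum.
Qed.

End Lemma51.

Theorem lemma5p1 (C : numClosedFieldType) (a b : 'I_3 -> C) :
  lin_indep a b ->
  let ax := linform a in let bx := linform b in
  (* (A1) *)
  (forall f : {mpoly C[3]}, f \is 1.-homog ->
     (transv 1 f ax bx = 0 <->
      exists g0 h0 : C, f = g0 *: ax + h0 *: bx)) /\
  (* (B1) *)
  (forall f : {mpoly C[3]}, f \is 2.-homog ->
     (transv 1 f ax bx = 0 <->
      exists g0 h0 k0 : C, f = g0 *: ax ^+ 2 + h0 *: (ax * bx) + k0 *: bx ^+ 2)) /\
  (* (B2) *)
  (forall f : {mpoly C[3]}, f \is 2.-homog ->
     (transv 2 f (ax ^+ 2) (bx ^+ 2) = 0 <->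
      exists gx hx : {mpoly C[3]}, gx \is 1.-homog /\ hx \is 1.-homog /\
        f = gx * ax + hx * bx)) /\
  (* (C1) *)
  (forall f : {mpoly C[3]}, f \is 3.-homog ->
     (transv 1 f ax bx = 0 <->
      exists g0 h0 k0 i0 : C, f = g0 *: ax ^+ 3 + h0 *: (ax ^+ 2 * bx)
                               + k0 *: (ax * bx ^+ 2) + i0 *: bx ^+ 3)) /\
  (* (C2) *)
  (forall f : {mpoly C[3]}, f \is 3.-homog ->
     (transv 2 f (ax ^+ 2) (bx ^+ 2) = 0 <->
      exists gx hx kx : {mpoly C[3]},
        [/\ gx \is 1.-homog, hx \is 1.-homog & kx \is 1.-homog] /\
        f = gx * ax ^+ 2 + hx * (ax * bx) + kx * bx ^+ 2)) /\
  (* (C3) *)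
  (forall f : {mpoly C[3]}, f \is 3.-homog ->
     (transv 3 f (ax ^+ 3) (bx ^+ 3) = 0 <->
      exists gxx hxx : {mpoly C[3]}, gxx \is 2.-homog /\ hxx \is 2.-homog /\
        f = gxx * ax + hxx * bx)).
Proof.
move=> hab /=.
split; first exact: transv_A1.
split; first exact: transv_B1.
split; first exact: transv_B2.
split; first exact: transv_C1.
split; first exact: transv_C2.
exact: transv_C3.
Qed.
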